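(* If an invariant state $\rho$ is supported on $\Omega=\{|-\rangle,|+\rangle,\varphi_{0_1},\varphi_{0_N}\}^\perp$, then $\rho$ is supported on $V$.
   Context: Fix integers $N\ge 2$ and $n_1\ge n_2\ge\dots\ge n_N\ge 1$. Let $\mathcal H$ be a finite-dimensional complex Hilbert space with orthonormal basis $\{|-\rangle,|+\rangle\}\cup\{|a_k\rangle:1\le k\le N,\ 0\le a\le n_k-1\}$. For vectors $x,y$, $|x\rangle\langle y|$ denotes the operator $u\mapsto\langle y,u\rangle x$. Put $E_k=\mathrm{span}\{|a_k\rangle:0\le a\le n_k-1\}$, $P_k$ the orthogonal projection onto $E_k$, $P_\pm=|\pm\rangle\langle\pm|$, $\zeta_k=e^{2\pi i/n_k}$, and $\varphi_{a_k}=n_k^{-1/2}\sum_{b=0}^{n_k-1}\zeta_k^{-ba}|b_k\rangle$ for $0\le a\le n_k-1$. For $1\le k\le N-1$ let $Z_k=n_k^{-1/2}\sum_{b=0}^{n_{k+1}-1}\sum_{a=0}^{n_k-1}\zeta_k^{ba}|b_{k+1}\rangle\langle a_k|$ (an operator on $\mathcal H$), $|Z|_k=Z_k^*Z_k$. The transport operator is $Z=\sum_{k=1}^{N-1}Z_k$. Let $\omega$ range over the set $\{\omega_+,\omega_-,\omega_1,\dots,\omega_{N-1}\}$ of (distinct) Bohr frequencies, and let $\Gamma_{\pm,\omega}>0$, $\gamma_{\pm,\omega}\in\mathbb R$ be constants. Kraus operators: $L_{-,\omega_+}=\sqrt{n_1\Gamma_{-,\omega_+}}|\varphi_{0_1}\rangle\langle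 +|$, $L_{+,\omega_+}=\sqrt{n_1\Gamma_{+,\omega_+}}|+\rangle\langle\varphi_{0_1}|$, $L_{-,\omega_k}=\sqrt{\Gamma_{-,\omega_k}}Z_k$, $L_{+,\omega_k}=\sqrt{\Gamma_{+,\omega_k}}Z_k^*$ ($1\le k\le N-1$), $L_{-,\omega_-}=\sqrt{\Gamma_{-,\omega_-}}|-\rangle\langle\varphi_{0_N}|$, $L_{+,\omega_-}=0$. Effective Hamiltonian $H_{\mathrm{eff}}=n_1\gamma_{-,\omega_+}P_+-n_1\gamma_{+,\omega_+}|\varphi_{0_1}\rangle\langle\varphi_{0_1}|+\gamma_{-,\omega_-}|\varphi_{0_N}\rangle\langle\varphi_{0_N}|-\gamma_{+,\omega_-}P_-+\sum_{k=1}^{N-1}(\gamma_{-,\omega_k}|Z|_k-\gamma_{+,\omega_k}P_{k+1})$. The generator is $\mathcal L(\rho)=-i[H_{\mathrm{eff}},\rho]+\sum_{\omega}\sum_{\epsilon=\pm}\big(L_{\epsilon,\omega}\rho L_{\epsilon,\omega}^*-\tfrac12\{L_{\epsilon,\omega}^*L_{\epsilon,\omega},\rho\}\big)$. A state is a positive operator of trace one; it is invariant if $\mathcal L(\rho)=0$; an operator is supported on a subspace $E$ if its range is contained in $E$. $V$ is the orthogonal complement of the set $\{|-\rangle,|+\rangle,Z^n\varphi_{0_1},Z^{*n}\varphi_{0_N},Z^{*s}\varphi_{0_{2m+1}}:0\le n\le N-1,\ 1\le m\le (N-1)/2,\ 1\le s\le 2m\}$. *)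

From mathcomp Require Import all_boot all_order all_algebra.
From mathcomp Require Import complex.
From mathcomp Require Import reals trigo.
Import Order.TTheory GRing.Theory Num.Theory.
Local Open Scope ring_scope.

(* Conventions.
   - The complex numbers are C := R[i] for an arbitrary R : realType.
   - Levels k = 1..N of the paper are indexed 0..N-1 here (k_here = k_paper - 1);
     the multiplicities are n : nat -> nat, only n 0 .. n (N-1) matter.
   - The Hilbert space H has orthonormal basis indexed by the finite type
     idx = bool + {k : 'I_N & 'I_(n k)}  (inl false = |->, inl true = |+>,
     inr (k; a) = |a_{k+1}> in the paper's numbering).  H is realised as the
     column vectors 'cV[C]_#|idx|, the basis vector of x being delta at enum_rank x.
   - Operators are square matrices; adj A is the conjugate transpose (A^* ),
     ketbra x y = |x><y| = x y^*, and <y,u> = (y^* u) (antilinear in y).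
   - Signs epsilon = +,- are encoded by true,false; Bohr frequencies by
     bohr = bool + 'I_(N-1): inl true = omega_+, inl false = omega_-,
     inr j = omega_{j+1} (paper numbering). *)

Section Model.
Variable R : realType.
Variable N : nat.
Variable n : nat -> nat.

Local Notation C := R[i].

Definition idx : finType := (bool + {k : 'I_N & 'I_(n k)})%type.
Definition hdim : nat := #|{: idx}|.

Local Notation vec := 'cV[C]_hdim.
Local Notation op := 'M[C]_hdim.

Definition adj (p q : nat) (A : 'M[C]_(p, q)) : 'M[C]_(q, p) :=
  (map_mx Num.conj A)^T.
Arguments adj {p q} A.

Definition ketbra (u v : vec) : op := u *m adj v.

Definition inner (u v : vec) : C := (adj u *m v) 0 0.

Definition idx_of (i : 'I_hdim) : idx := enum_val i.

Definition ket (x : idx) : vec := delta_mx (enum_rank x) 0.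

Definition ketpm (b : bool) : vec := ket (inl b).

(* |a_k> (0-based level k, 0 <= a < n k); zero if (k,a) is out of range *)
Definition ketn (k a : nat) : vec :=
  \col_i (if idx_of i is inr s
          then (((tag s : nat) == k) && ((tagged s : nat) == a))%:R
          else 0).

Definition RtoC (x : R) : C := Complex x 0.

Definition zeta (m : nat) : C :=
  Complex (cos (2 * pi / m%:R)) (sin (2 * pi / m%:R)).

Definition isqrt (m : nat) : C := RtoC (Num.sqrt (m%:R : R))^-1.

Definition phi (k a : nat) : vec :=
  isqrt (n k) *: \sum_(b < n k) (zeta (n k) ^- (b * a)) *: ketn k b.

Definition Zk (k : nat) : op :=
  isqrt (n k) *: \sum_(b < n k.+1) \sum_(a < n k)
     (zeta (n k) ^+ (b * a)) *: ketbra (ketn k.+1 b) (ketn k a).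

Definition absZ (k : nat) : op := adj (Zk k) *m Zk k.

Definition Zop : op := \sum_(k < N.-1) Zk k.

Definition Pk (k : nat) : op := \sum_(a < n k) ketbra (ketn k a) (ketn k a).
Definition Ppm (b : bool) : op := ketbra (ketpm b) (ketpm b).

Definition bohr : finType := (bool + 'I_N.-1)%type.

Variable Gamma : bool -> bohr -> R.
Variable gam : bool -> bohr -> R.

Definition sqrtC (x : R) : C := RtoC (Num.sqrt x).

Definition phi01 : vec := phi 0 0.
Definition phi0N : vec := phi N.-1 0.

Definition kraus (eps : bool) (w : bohr) : op :=
  match w with
  | inl true =>
      if eps then sqrtC ((n 0)%:R * Gamma true w) *: ketbra (ketpm true) phi01
      else sqrtC ((n 0)%:R * Gamma false w) *: ketbra phi01 (ketpm true)
  | inl false =>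
      if eps then 0
      else sqrtC (Gamma false w) *: ketbra (ketpm false) phi0N
  | inr j =>
      if eps then sqrtC (Gamma true w) *: adj (Zk j)
      else sqrtC (Gamma false w) *: Zk j
  end.

Definition wplus : bohr := inl true.
Definition wminus : bohr := inl false.
Definition wk (j : 'I_N.-1) : bohr := inr j.

Definition Heff : op :=
  RtoC ((n 0)%:R * gam false wplus) *: Ppm true
  - RtoC ((n 0)%:R * gam true wplus) *: ketbra phi01 phi01
  + RtoC (gam false wminus) *: ketbra phi0N phi0N
  - RtoC (gam true wminus) *: Ppm false
  + \sum_(j < N.-1) (RtoC (gam false (wk j)) *: absZ j
                     - RtoC (gam true (wk j)) *: Pk j.+1).

Definition Lgen (rho : op) : op :=
  - 'i *: (Heff *m rho - rho *m Heff)
  + \sum_(w : bohr) \sum_(eps : bool)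
      (kraus eps w *m rho *m adj (kraus eps w)
       - 2^-1 *: (adj (kraus eps w) *m kraus eps w *m rho
                  + rho *m (adj (kraus eps w) *m kraus eps w))).

Definition positive_op (A : op) : Prop := forall v : vec, 0 <= inner v (A *m v).
Definition is_state (rho : op) : Prop := positive_op rho /\ \tr rho = 1.
Definition is_invariant (rho : op) : Prop := Lgen rho = 0.

Definition orth_compl (S : vec -> Prop) : vec -> Prop :=
  fun v => forall w, S w -> inner w v = 0.
Definition supported_on (A : op) (E : vec -> Prop) : Prop :=
  forall u : vec, E (A *m u).

Definition Omega_gens (w : vec) : Prop :=
  w = ketpm false \/ w = ketpm true \/ w = phi01 \/ w = phi0N.
Definition Omega : vec -> Prop := orth_compl Omega_gens.

(* generators of V^perp; paper level 2m+1 is level 2m here *)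
Definition V_gens (w : vec) : Prop :=
  w = ketpm false \/ w = ketpm true
  \/ (exists m, (m <= N - 1)%N /\ w = Zop ^+ m *m phi01)
  \/ (exists m, (m <= N - 1)%N /\ w = (adj Zop) ^+ m *m phi0N)
  \/ (exists m s, (1 <= m <= (N - 1) %/ 2)%N /\ (1 <= s <= 2 * m)%N
                  /\ w = (adj Zop) ^+ s *m phi (2 * m) 0).
Definition V : vec -> Prop := orth_compl V_gens.

End Model.

From Pilot Require Import Defs.
From mathcomp Require Import all_boot all_order all_algebra.
From mathcomp Require Import complex.
From mathcomp Require Import reals trigo.
From mathcomp Require Import ring zify.
Import Order.TTheory GRing.Theory Num.Theory.
Set Implicit Arguments.
Unset Strict Implicit.
Unset Printing Implicit Defensive.
Local Open Scope ring_scope.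

(* For a positive [rho] with [L rho = 0] and [rho w = 0], [<w, L(rho) w>] is the sum
   of the nonnegative terms [<L* w, rho L* w>] over the Kraus operators [L]; so they
   all vanish and the kernel of [rho] is invariant under every [L*], in particular
   under [Z] and [Z*].  Support on [Omega] puts [|->], [|+>], [phi_{0_1}], [phi_{0_N}]
   into the kernel.  A discrete Fourier computation gives [Z_k phi_{0_k} = |0_{k+1}>]
   and [Z_{k+1} |0_{k+1}>] proportional to [phi_{0_{k+2}}], so every [phi_{0_{2m+1}}]
   is in the kernel as well.  Thus the kernel contains all generators of [V^perp]. *)

Section Adjoint.
Variable R : realType.
Local Notation C := R[i].
Local Notation adj := (adj R _ _).

Lemma adj_mul p q r (A : 'M[C]_(p, q)) (B : 'M[C]_(q, r)) :
  adj (A *m B) = adj B *m adj A.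
Proof. by rewrite /Defs.adj map_mxM trmx_mul. Qed.

Lemma adjK p q (A : 'M[C]_(p, q)) : adj (adj A) = A.
Proof. by apply/matrixP=> i j; rewrite /Defs.adj !mxE conjCK. Qed.

Lemma adjD p q (A B : 'M[C]_(p, q)) : adj (A + B) = adj A + adj B.
Proof. by apply/matrixP=> i j; rewrite /Defs.adj !mxE rmorphD. Qed.

Lemma adj_scale p q c (A : 'M[C]_(p, q)) : adj (c *: A) = c^* *: adj A.
Proof. by apply/matrixP=> i j; rewrite /Defs.adj !mxE rmorphM. Qed.

Lemma adj0 p q : adj (0 : 'M[C]_(p, q)) = 0.
Proof. by apply/matrixP=> i j; rewrite /Defs.adj !mxE rmorph0. Qed.

Lemma adj_sum p q I (r : seq I) (P : pred I) (F : I -> 'M[C]_(p, q)) :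
  adj (\sum_(i <- r | P i) F i) = \sum_(i <- r | P i) adj (F i).
Proof. exact: (big_morph _ (@adjD p q) (@adj0 p q)). Qed.

Lemma adj_delta d (i : 'I_d) : adj (delta_mx i 0 : 'cV[C]_d) = delta_mx 0 i.
Proof.
apply/matrixP=> a b; rewrite /Defs.adj !mxE andbC.
by case: (_ && _); rewrite /= ?conjC0 ?conjC1.
Qed.

End Adjoint.

Section Dot.
Variables (R : realType) (d : nat).
Local Notation C := R[i].
Local Notation adj := (adj R _ _).
Implicit Types (u v w : 'cV[C]_d) (A : 'M[C]_d).

(* [inner] is [dotv] at [d = hdim N n], up to conversion. *)
Definition dotv u v : C := (adj u *m v) 0 0.

Lemma dotvE u v : dotv u v = \sum_i (u i 0)^* * v i 0.
Proof. by rewrite /dotv !mxE; apply: eq_bigr => i _; rewrite /Defs.adj !mxE. Qed.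

Lemma dotvDr u v w : dotv u (v + w) = dotv u v + dotv u w.
Proof. by rewrite /dotv mulmxDr mxE. Qed.

Lemma dotvZr u c v : dotv u (c *: v) = c * dotv u v.
Proof. by rewrite /dotv -scalemxAr mxE. Qed.

Lemma dotvNr u v : dotv u (- v) = - dotv u v.
Proof. by rewrite -scaleN1r dotvZr mulN1r. Qed.

Lemma dotvBr u v w : dotv u (v - w) = dotv u v - dotv u w.
Proof. by rewrite dotvDr dotvNr. Qed.

Lemma dotv0r u : dotv u 0 = 0.
Proof. by rewrite /dotv mulmx0 mxE. Qed.

Lemma dotv_sumr u I (r : seq I) (P : pred I) (F : I -> 'cV[C]_d) :
  dotv u (\sum_(i <- r | P i) F i) = \sum_(i <- r | P i) dotv u (F i).
Proof. exact: (big_morph _ (dotvDr u) (dotv0r u)). Qed.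

Lemma dotvDl u v w : dotv (v + w) u = dotv v u + dotv w u.
Proof. by rewrite /dotv adjD mulmxDl mxE. Qed.

Lemma dotvZl u c v : dotv (c *: v) u = c^* * dotv v u.
Proof. by rewrite /dotv adj_scale -scalemxAl mxE. Qed.

Lemma dotvNl u v : dotv (- v) u = - dotv v u.
Proof. by rewrite -scaleN1r dotvZl rmorphN1 mulN1r. Qed.

Lemma dotv0l u : dotv 0 u = 0.
Proof. by rewrite /dotv adj0 mul0mx mxE. Qed.

Lemma dotv_adj u A v : dotv u (A *m v) = dotv (adj A *m u) v.
Proof. by rewrite /dotv adj_mul adjK mulmxA. Qed.

Lemma dotvv_ge0 u : 0 <= dotv u u.
Proof. by rewrite dotvE; apply: sumr_ge0 => i _; rewrite -normCKC exprn_ge0. Qed.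

Lemma dotvv_eq0 u : dotv u u = 0 -> u = 0.
Proof.
rewrite dotvE => /psumr_eq0P u0; apply/matrixP=> i j; rewrite (ord1 j) mxE.
have /eqP := u0 (fun k _ => ltac:(by rewrite -normCKC exprn_ge0)) i isT.
by rewrite -normCKC expf_eq0 /= normr_eq0 => /eqP.
Qed.

Lemma dotv_delta A i j : dotv (delta_mx i 0) (A *m delta_mx j 0) = A i j.
Proof. by rewrite /dotv adj_delta mulmxA -rowE -colE !mxE. Qed.

End Dot.

Section PositiveOperator.
Variables (R : realType) (d : nat) (rho : 'M[R[i]]_d).
Local Notation adj := (adj R _ _).
Local Notation dotv := (@dotv R d).
Hypothesis rho_psd : forall v, 0 <= dotv v (rho *m v).

Let q v := dotv v (rho *m v).

Let q_conj v : (q v)^* = q v.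
Proof. exact/conj_Creal/ger0_real/rho_psd. Qed.

Lemma psd_herm u v : dotv u (rho *m v) = (dotv v (rho *m u))^*.
Proof.
set a := dotv u (rho *m v); set b := dotv v (rho *m u).
have q_add : q (u + v) = q u + q v + (a + b).
  by rewrite /q mulmxDr !dotvDl !dotvDr -/a -/b; ring.
have q_addi : q (u + 'i *: v) = q u + q v + 'i * (a - b).
  have ii z : 'i * ('i * z) = - z :> R[i] by rewrite mulrA -expr2 sqrCi mulN1r.
  rewrite /q mulmxDr -scalemxAr !dotvDl !dotvDr !dotvZl !dotvZr -/a -/b conjCi.
  rewrite !mulNr ii; ring.
have re : (a + b)^* = a + b.
  have -> : a + b = q (u + v) - q u - q v by rewrite q_add; ring.
  by rewrite !rmorphB /= !q_conj.
have im : ('i * (a - b))^* = 'i * (a - b).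
  have -> : 'i * (a - b) = q (u + 'i *: v) - q u - q v by rewrite q_addi; ring.
  by rewrite !rmorphB /= !q_conj.
rewrite rmorphD /= in re; rewrite rmorphM rmorphB /= conjCi in im.
have im' : b^* - a^* = a - b.
  by apply: (mulfI (neq0Ci R[i])); rewrite -im; ring.
have : (a - b^*) * 2 = 0.
  have -> : (a - b^*) * 2 = (a + b - (a^* + b^*)) + (a - b - (b^* - a^*)) by ring.
  by rewrite re im' !subrr addr0.
by move/eqP; rewrite mulf_eq0 pnatr_eq0 orbF subr_eq0 => /eqP.
Qed.

Lemma psd_adj : adj rho = rho.
Proof.
apply/matrixP=> i j; rewrite /Defs.adj !mxE -!dotv_delta psd_herm.
by rewrite conjCK.
Qed.

(* [w := (c + 1) v - s (rho v)] is chosen so that [q w = - s^2 (c + 2)], where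
   [s = |rho v|^2] and [c = q (rho v)]; positivity of [q w] then forces [s = 0]. *)
Lemma psd_ker v : q v = 0 -> rho *m v = 0.
Proof.
move=> qv0; set y := rho *m v; set s := dotv y y; set c := q y.
have s_ge0 : 0 <= s by apply: dotvv_ge0.
have c_ge0 : 0 <= c by apply: rho_psd.
have s_conj : s^* = s by apply/conj_Creal/ger0_real.
pose w := (c + 1) *: v - s *: y.
have qw : q w = - (s * s * (c + 2)).
  rewrite /q /w mulmxBr -!scalemxAr !dotvDl !dotvNl !dotvDr !dotvNr !dotvZl !dotvZr.
  rewrite -/(q v) qv0 -/(q y) -/c -/y -/s (psd_herm v y) -/y -/s s_conj.
  by rewrite rmorphD /= q_conj conjC1 -/c; ring.
have : s * s * (c + 2) <= 0 by rewrite -oppr_ge0 -qw; apply: rho_psd.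
rewrite pmulr_lle0 ?ltr_wpDl // => ss_le0.
apply: dotvv_eq0; apply/eqP; rewrite -[_ == 0]orbb -mulf_eq0 eq_le ss_le0 mulr_ge0 //.
Qed.

Lemma psd_kerP w : rho *m w = 0 <-> forall u, dotv w (rho *m u) = 0.
Proof.
split=> [rho_w u | orth_w]; first by rewrite psd_herm rho_w dotv0r conjC0.
by apply: dotvv_eq0; rewrite psd_herm orth_w conjC0.
Qed.
End PositiveOperator.

Section Lindblad.
Variables (R : realType) (d : nat) (I : finType).
Local Notation C := R[i].
Local Notation adj := (adj R _ _).
Local Notation dotv := (@dotv R d).
Variables (H : 'M[C]_d) (L : I -> 'M[C]_d).

Definition lindblad (rho : 'M[C]_d) : 'M[C]_d :=
  - 'i *: (H *m rho - rho *m H)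
  + \sum_i (L i *m rho *m adj (L i)
            - 2^-1 *: (adj (L i) *m L i *m rho + rho *m (adj (L i) *m L i))).

Variable rho : 'M[C]_d.
Hypothesis rho_psd : forall v, 0 <= dotv v (rho *m v).

Lemma dotv_lindblad_ker w : rho *m w = 0 ->
  dotv w (lindblad rho *m w) =
  \sum_i dotv (adj (L i) *m w) (rho *m (adj (L i) *m w)).
Proof.
move=> rho_w.
have rhoX X : dotv w (rho *m X *m w) = 0.
  by rewrite -mulmxA dotv_adj (psd_adj rho_psd) rho_w dotv0l.
have Xrho X : dotv w (X *m rho *m w) = 0 by rewrite -mulmxA rho_w mulmx0 dotv0r.
rewrite /lindblad mulmxDl dotvDr -scalemxAl dotvZr mulmxBl dotvBr rhoX Xrho.
rewrite subrr mulr0 add0r mulmx_suml dotv_sumr; apply: eq_bigr => i _.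
rewrite mulmxBl dotvBr -scalemxAl dotvZr mulmxDl dotvDr rhoX Xrho.
by rewrite addr0 mulr0 subr0 -!mulmxA (dotv_adj w (L i)).
Qed.

Lemma lindblad_ker_adj : lindblad rho = 0 ->
  forall i (w : 'cV[C]_d), rho *m w = 0 -> rho *m (adj (L i) *m w) = 0.
Proof.
move=> stat i w rho_w; apply: (psd_ker rho_psd).
have := dotv_lindblad_ker rho_w; rewrite stat mul0mx dotv0r => /esym.
by move/psumr_eq0P => /(_ (fun j _ => rho_psd _) i isT).
Qed.

End Lindblad.

Section KernelStable.
Variables (R : realType) (d : nat) (rho : 'M[R[i]]_d).

Definition ker_stable (A : 'M[R[i]]_d) :=
  forall w : 'cV[R[i]]_d, rho *m w = 0 -> rho *m (A *m w) = 0.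

Lemma ker_stableZ c A : c != 0 -> ker_stable (c *: A) -> ker_stable A.
Proof.
move=> c0 cA w /cA; rewrite -scalemxAl -scalemxAr => /eqP.
by rewrite scaler_eq0 (negbTE c0) => /eqP.
Qed.

Lemma ker_stable_sum (I : Type) (r : seq I) (P : pred I) (F : I -> 'M_d) :
  (forall i, P i -> ker_stable (F i)) -> ker_stable (\sum_(i <- r | P i) F i).
Proof.
move=> FP w rho_w; rewrite mulmx_suml mulmx_sumr big1 // => i Pi.
exact: FP.
Qed.

Lemma ker_stableX A m : ker_stable A -> ker_stable (A ^+ m).
Proof.
move=> sA; elim: m => [|m IHm] w rho_w; first by rewrite expr0 mul1mx.
by rewrite exprS -mulmxE -mulmxA; apply/sA/IHm.
Qed.

End KernelStable.

Section RootOfUnity.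
Variable R : realType.

Lemma zetaX m k : zeta R m ^+ k =
  Complex (cos (k%:R * (2 * pi / m%:R))) (sin (k%:R * (2 * pi / m%:R))).
Proof.
elim: k => [|k IHk]; first by rewrite expr0 !mul0r cos0 sin0.
rewrite exprSr IHk /zeta; set t := 2 * pi / m%:R; simpc.
by rewrite -[k.+1%:R]natr1 mulrDl mul1r cosD sinD; congr Complex; ring.
Qed.

Lemma zeta_expr_order m : (0 < m)%N -> zeta R m ^+ m = 1.
Proof.
move=> m_gt0; rewrite zetaX mulrCA divff ?pnatr_eq0 -?lt0n // mulr1 mulr_natl.
by rewrite cos2pi sin2pi.
Qed.

(* With [y = b pi / m] in [(0, pi)], [cos (2 y) = 1] would force [sin y = 0]. *)
Lemma zeta_expr_neq1 m b : (0 < b < m)%N -> zeta R m ^+ b != 1.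
Proof.
case/andP=> b_gt0 b_lt_m; rewrite zetaX; apply/eqP; case=> cos1 _.
pose y : R := b%:R * pi / m%:R.
have ey : b%:R * (2 * pi / m%:R) = y *+ 2 by rewrite /y -mulr_natr; ring.
have m_gt0 : (0 < m)%N := ltn_trans b_gt0 b_lt_m.
have y_in : 0 < y < pi.
  rewrite !mulr_gt0 ?pi_gt0 ?invr_gt0 ?ltr0n //=.
  by rewrite ltr_pdivrMr ?ltr0n // mulrC ltr_pM2l ?pi_gt0 ?ltr_nat.
move: cos1; rewrite ey cos_mulr2n => /eqP; rewrite subr_eq -mulr_natr => /eqP cos1.
have cosy2 : cos y ^+ 2 = 1.
  by apply: (mulIf (_ : 2%:R != 0)); rewrite ?pnatr_eq0 // cos1 mul1r.
have : sin y ^+ 2 = 0 by rewrite sin2cos2 cosy2 subrr.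
by move/eqP; rewrite expf_eq0 /= => /eqP sin0; move: (sin_gt0_pi y_in); rewrite sin0 ltxx.
Qed.

Lemma sum_zeta_exprM m b : (b < m)%N ->
  \sum_(c < m) zeta R m ^+ (b * c) = if b == 0%N then m%:R else 0.
Proof.
move=> b_lt_m; have m_gt0 : (0 < m)%N := leq_ltn_trans (leq0n b) b_lt_m.
case: eqP => [->|/eqP b_neq0].
  by rewrite (eq_bigr (fun _ => 1)) ?sumr_const ?card_ord // => c _; rewrite mul0n expr0.
have zb_neq1 : zeta R m ^+ b - 1 != 0 by rewrite subr_eq0 zeta_expr_neq1 // lt0n b_neq0.
suff : (zeta R m ^+ b - 1) * \sum_(c < m) zeta R m ^+ (b * c) = 0.
  by move/eqP; rewrite mulf_eq0 (negbTE zb_neq1) => /eqP.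
rewrite (eq_bigr (fun c : 'I_m => (zeta R m ^+ b) ^+ c)) => [|c _]; last by rewrite exprM.
by rewrite -subrX1 exprAC zeta_expr_order // expr1n subrr.
Qed.

End RootOfUnity.

Section Scalars.
Variable R : realType.

Lemma sqrtC_neq0 (x : R) : 0 < x -> Defs.sqrtC R x != 0.
Proof.
move=> x_gt0; apply/eqP; rewrite /Defs.sqrtC /RtoC => -[] /eqP.
by rewrite sqrtr_eq0 leNgt x_gt0.
Qed.

Lemma isqrt_neq0 m : (0 < m)%N -> isqrt R m != 0.
Proof.
move=> m_gt0; apply/eqP; rewrite /isqrt /RtoC => -[] /eqP.
by rewrite invr_eq0 sqrtr_eq0 leNgt ltr0n m_gt0.
Qed.

Lemma isqrt_sqr m : (0 < m)%N -> isqrt R m ^+ 2 * m%:R = 1.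
Proof.
move=> m_gt0; rewrite /isqrt /RtoC complexr0 -(rmorph_nat (real_complex R)).
rewrite -rmorphXn -rmorphM /= exprVn sqr_sqrtr ?ler0n // mulVf ?pnatr_eq0 -?lt0n //.
Qed.

End Scalars.

Section LevelVectors.
Variables (R : realType) (N : nat) (n : nat -> nat).
Local Notation adj := (adj R _ _).
Local Notation ket := (ket R N n).
Local Notation ketn := (ketn R N n).
Local Notation Zk := (Zk R N n).
Local Notation phi := (phi R N n).

Definition level_idx k a (hk : (k < N)%N) (ha : (a < n k)%N) : idx N n :=
  inr (existT (fun k : 'I_N => 'I_(n k)) (Ordinal hk) (Ordinal ha)).

Lemma ketn_ket k a (hk : (k < N)%N) (ha : (a < n k)%N) :
  ketn k a = ket (level_idx hk ha).
Proof.
apply/matrixP=> i j; rewrite (ord1 j) !mxE /idx_of eqxx andbT.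
have -> : (i == enum_rank (level_idx hk ha)) = (enum_val i == level_idx hk ha).
  by apply/eqP/eqP => [->|<-]; [rewrite enum_rankK | rewrite enum_valK].
case: (enum_val i) => [//|[k0 a0]] /=; congr ((nat_of_bool _)%:R).
apply/andP/eqP => [[/eqP ek /eqP ea] | ]; last first.
  move/(congr1 (fun x : idx N n => if x is inr s then (tag s : nat, tagged s : nat)
                                   else (0, 0)%N)) => /= [ek ea].
  by split; apply/eqP.
have ek' : k0 = Ordinal hk by apply: val_inj.
by subst k0; congr inr; congr existT; apply: val_inj.
Qed.

Lemma ket_orth (x y : idx N n) : adj (ket x) *m ket y = ((x == y)%:R)%:M.
Proof.
rewrite /Defs.ket adj_delta mul_delta_mx_cond (inj_eq enum_rank_inj).
apply/matrixP=> a b; rewrite (ord1 a) (ord1 b) !mxE.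
by case: (x == y); rewrite ?mulr1n ?mulr0n !mxE ?eqxx.
Qed.

Lemma ketn_orth k (hk : (k < N)%N) (a c : 'I_(n k)) :
  adj (ketn k a) *m ketn k c = ((a == c)%:R)%:M.
Proof.
rewrite (ketn_ket hk (ltn_ord a)) (ketn_ket hk (ltn_ord c)) ket_orth.
suff -> : (level_idx hk (ltn_ord a) == level_idx hk (ltn_ord c)) = (a == c) by [].
apply/eqP/eqP => [ac|->] //; apply: val_inj.
exact: (congr1 (fun x : idx N n => if x is inr s then tagged s : nat else 0%N) ac).
Qed.

Lemma Zk_ketn k (hk : (k < N)%N) (c : 'I_(n k)) :
  Zk k *m ketn k c =
  isqrt R (n k) *: \sum_(b < n k.+1) zeta R (n k) ^+ (b * c) *: ketn k.+1 b.
Proof.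
rewrite /Zk -scalemxAl mulmx_suml; congr (_ *: _); apply: eq_bigr => b _.
rewrite mulmx_suml (bigD1 c) //= big1 => [|a /negbTE ac].
  by rewrite -scalemxAl -mulmxA ketn_orth // eqxx mul_mx_scalar scale1r addr0.
by rewrite -scalemxAl -mulmxA ketn_orth // ac mul_mx_scalar scale0r scaler0.
Qed.

Lemma phi0E k : phi k 0 = isqrt R (n k) *: \sum_(b < n k) ketn k b.
Proof.
by congr (_ *: _); apply: eq_bigr => b _; rewrite muln0 expr0 invr1 scale1r.
Qed.

Lemma Zk_ketn0 k (hk : (k < N)%N) (nk_gt0 : (0 < n k)%N) :
  Zk k *m ketn k 0 = isqrt R (n k) *: \sum_(b < n k.+1) ketn k.+1 b.
Proof.
rewrite (Zk_ketn hk (Ordinal nk_gt0)); congr (_ *: _); apply: eq_bigr => b _.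
by rewrite muln0 expr0 scale1r.
Qed.

(* Only the [b = 0] coefficient survives the sum over [c] of [zeta ^ (b c)], because
   every [b < n k.+1 <= n k]. *)
Lemma Zk_phi0 k : (k.+1 < N)%N -> (0 < n k.+1)%N -> (n k.+1 <= n k)%N ->
  Zk k *m phi k 0 = ketn k.+1 0.
Proof.
move=> hk1 nk1_gt0 nk1_le; have hk := ltnW hk1.
rewrite phi0E -scalemxAr mulmx_sumr.
under eq_bigr => c _ do rewrite (Zk_ketn hk c).
rewrite -scaler_sumr exchange_big /=.
under eq_bigr => b _ do rewrite -scaler_suml.
have nk_gt0 := leq_trans nk1_gt0 nk1_le.
rewrite (bigD1 (Ordinal nk1_gt0)) //= sum_zeta_exprM // big1 => [|b b_neq0].
  by rewrite addr0 !scalerA -expr2 isqrt_sqr ?scale1r.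
by rewrite sum_zeta_exprM ?(leq_trans (ltn_ord b) nk1_le) // ifN ?scale0r.
Qed.

End LevelVectors.

Lemma Lgen_lindblad (R : realType) N n (Gamma gam : bool -> bohr N -> R)
    (rho : 'M[R[i]]_(hdim N n)) :
  Lgen R N n Gamma gam rho =
  lindblad (Heff R N n gam) (fun p : bohr N * bool => kraus R N n Gamma p.2 p.1) rho.
Proof. by rewrite /Lgen /lindblad pair_big. Qed.

Lemma supported_on_orth_complP (R : realType) N n (rho : 'M[R[i]]_(hdim N n)) S :
  positive_op R N n rho ->
  supported_on R N n rho (orth_compl R N n S) <-> forall w, S w -> rho *m w = 0.
Proof.
move=> rho_psd; split=> [supp w Sw | kerS u w Sw].
  by apply/(psd_kerP rho_psd) => u; apply: supp.
by move: u; apply/(psd_kerP rho_psd)/kerS.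
Qed.

Section Transport.
Variables (R : realType) (N : nat) (n : nat -> nat).
Variables (Gamma gam : bool -> bohr N -> R) (rho : 'M[R[i]]_(hdim N n)).
Hypothesis Gamma_gt0 : forall eps w, 0 < Gamma eps w.
Hypothesis rho_psd : positive_op R N n rho.
Hypothesis rho_inv : is_invariant R N n Gamma gam rho.
Local Notation adj := (adj R _ _).
Local Notation Zk := (Zk R N n).
Local Notation ker_stable := (ker_stable rho).

Lemma ker_stable_adj_kraus eps w : ker_stable (adj (kraus R N n Gamma eps w)).
Proof.
apply: (@lindblad_ker_adj _ _ _ (Heff R N n gam)
  (fun p : bohr N * bool => kraus R N n Gamma p.2 p.1) _ rho_psd _ (w, eps)).
by rewrite -Lgen_lindblad.
Qed.

Lemma ker_stable_Zk k : (k < N.-1)%N -> ker_stable (Zk k).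
Proof.
move=> hk; apply: (@ker_stableZ _ _ _ (Defs.sqrtC R (Gamma true (inr (Ordinal hk))))^*).
  by rewrite conjC_eq0 sqrtC_neq0.
by rewrite -[Zk k]adjK -adj_scale; apply: (ker_stable_adj_kraus true (inr (Ordinal hk))).
Qed.

Lemma ker_stable_adjZk k : (k < N.-1)%N -> ker_stable (adj (Zk k)).
Proof.
move=> hk; apply: (@ker_stableZ _ _ _ (Defs.sqrtC R (Gamma false (inr (Ordinal hk))))^*).
  by rewrite conjC_eq0 sqrtC_neq0.
by rewrite -adj_scale; apply: (ker_stable_adj_kraus false (inr (Ordinal hk))).
Qed.

Lemma ker_stable_Zop : ker_stable (Zop R N n).
Proof. by apply: ker_stable_sum => k _; apply: ker_stable_Zk. Qed.

Lemma ker_stable_adjZop : ker_stable (adj (Zop R N n)).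
Proof. by rewrite /Zop adj_sum; apply: ker_stable_sum => k _; apply: ker_stable_adjZk. Qed.

Hypothesis n_gt0 : forall k, (k < N)%N -> (0 < n k)%N.
Hypothesis n_mono : forall k, (k.+1 < N)%N -> (n k.+1 <= n k)%N.

(* [Z_k phi_{0_k} = |0_{k+1}>] and [Z_{k+1} |0_{k+1}>] is a nonzero multiple of
   [phi_{0_{k+2}}], so the kernel climbs two levels at a time. *)
Lemma ker_phi0_double m : rho *m phi01 R N n = 0 ->
  (m.*2 < N)%N -> rho *m phi R N n m.*2 0 = 0.
Proof.
move=> ker_phi01; elim: m => [//|m IHm]; rewrite doubleS => hm.
have hk1 : (m.*2.+1 < N)%N by lia.
have hk1' : (m.*2.+1 < N.-1)%N by lia.
have ker_ketn : rho *m ketn R N n m.*2.+1 0 = 0.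
  rewrite -(Zk_phi0 R hk1 (n_gt0 hk1) (n_mono hk1)).
  by apply/ker_stable_Zk/IHm; lia.
have := ker_stable_Zk hk1' ker_ketn.
rewrite (Zk_ketn0 R hk1 (n_gt0 hk1)) -scalemxAr => /eqP.
rewrite scaler_eq0 (negbTE (isqrt_neq0 R (n_gt0 hk1))) /= => /eqP ker_sum.
by rewrite phi0E -scalemxAr ker_sum scaler0.
Qed.

End Transport.

Theorem proposition3p11 (R : realType) (N : nat) (n : nat -> nat)
  (HN : (2 <= N)%N)
  (Hn_pos : forall k, (k < N)%N -> (1 <= n k)%N)
  (Hn_mono : forall k, (k.+1 < N)%N -> (n k.+1 <= n k)%N)
  (Gamma gam : bool -> bohr N -> R)
  (HGamma : forall eps w, 0 < Gamma eps w)
  (rho : 'M[R[i]]_(hdim N n))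
  (Hstate : is_state R N n rho)
  (Hinv : is_invariant R N n Gamma gam rho)
  (Hsupp : supported_on R N n rho (Omega R N n)) :
  supported_on R N n rho (V R N n).
Proof.
have rho_psd := Hstate.1.
move: Hsupp; rewrite /Omega /V !supported_on_orth_complP // => ker_Omega.
have ker_phi01 : rho *m phi01 R N n = 0 by apply: ker_Omega; do 2 right; left.
have ker_Zop := ker_stable_Zop HGamma rho_psd Hinv.
have ker_adjZop := ker_stable_adjZop HGamma rho_psd Hinv.
move=> w [->|[->|[[m [_ ->]]|[[m [_ ->]]|[m [s [/andP [_ m_le] [_ ->]]]]]]]].
- by apply: ker_Omega; left.
- by apply: ker_Omega; right; left.
- exact: (ker_stableX m ker_Zop).
- by apply: (ker_stableX m ker_adjZop); apply: ker_Omega; do 3 right.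
- apply: (ker_stableX s ker_adjZop); rewrite mul2n.
  apply: (ker_phi0_double HGamma rho_psd Hinv Hn_pos Hn_mono ker_phi01).
  by move: m_le; rewrite leq_divRL //; lia.
Qed.
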